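(* Assume the Mixing, Uniformly Bounded Functions and Uniform Bracketing Entropy assumptions. For $g\in\mathcal G^*$ let $h_g(Z)=\mathbb E[g_A(S,U)\mid Z]$. Then \[ \sup_{g\in\mathcal G^*}\Big|\frac1n\sum_{i=1}^nh_g(Z_i)^2-\mathbb E[h_g(Z)^2]\Big|=o_p(1). \]
   Context: Setting: MDPUC with finite state space $\mathcal S$, actions $[m]$, confounder space $\mathcal U$ and iid confounders; data $Z_i=(S_i,A_i,S_i')$, $i\in[n]$, generated by a behavior policy from a stationary chain of $X=(Z,U)$; expectations are under this stationary distribution; $n\to\infty$. Mixing: for some $2<p\le\infty$, $\sum_kk^{2/(p-2)}\beta(k)<\infty$ for the $\beta$-mixing coefficients of the $X$-chain. $\mathcal G$ is a normed class of $g=(g_1,\dots,g_m)$, $g_a:\mathcal S\times\mathcal U\to\mathbb R$; $\mathcal G^*=\{g/\|g\|:g\in\mathcal G,\|g\|>0\}$; $\mathcal G^*_a=\{g_a:g\in\mathcal G^*\}$. Uniformly Bounded Functions: there is $0<G<\infty$ with $g_a(s,u)\le G$ for all $g\in\mathcal G^*$, $a,s,u$. Uniform Bracketing Entropy: $\int_0^\infty\sqrt{\log N_{[]}(\epsilon,\mathcal G^*_a,L_p)}d\epsilon<\infty$ for each $a$, with $p$ as in Mixing, $N_{[]}$ the bracketing number. *)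

From HB Require Import structures.
From mathcomp Require Import all_boot all_order all_algebra.
From mathcomp Require Import all_classical all_reals all_analysis.
Set Implicit Arguments. Unset Strict Implicit. Unset Printing Implicit Defensive.
Import Order.TTheory GRing.Theory Num.Theory.
Import numFieldNormedType.Exports.
Local Open Scope classical_set_scope.
Local Open Scope ring_scope.

Section MDPUC.
Variables (R : realType) (d : measure_display) (Omega : measurableType d)
  (P : probability Omega R).
Variables (S : finType) (m : nat) (dU : measure_display) (U : measurableType dU).

(* observed data Z = (S, A, S') *)
Definition Zobs := (S * 'I_m * S)%type.
Definition gfun := 'I_m -> S -> U -> R.

Variables (Zv : nat -> Omega -> Zobs) (Uv : nat -> Omega -> U).

(* strict stationarity of X_i = (Z_i, U_i): all finite-dimensional laws
   (on measurable rectangles, a generating pi-system) are shift invariant *)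
Definition stationary : Prop :=
  forall (k t : nat) (zs : 'I_k.+1 -> Zobs) (Bs : 'I_k.+1 -> set U),
    (forall i, measurable (Bs i)) ->
    P [set w | forall i : 'I_k.+1, Zv (t + i) w = zs i /\ Bs i (Uv (t + i) w)]
    = P [set w | forall i : 'I_k.+1, Zv i w = zs i /\ Bs i (Uv i w)].

Definition gen_X (j : nat) : set (set Omega) :=
  [set A | (exists z, A = Zv j @^-1` [set z]) \/
           (exists B, measurable B /\ A = Uv j @^-1` B)].

Definition past (t : nat) : set (set Omega) :=
  smallest (sigma_algebra setT) [set A | exists j, (j <= t)%N /\ gen_X j A].
Definition future (t : nat) : set (set Omega) :=
  smallest (sigma_algebra setT) [set A | exists j, (t <= j)%N /\ gen_X j A].

Definition fin_partition (F : set (set Omega)) (I : nat) (a : 'I_I -> set Omega) :=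
  [/\ forall i, F (a i),
      forall i j, i != j -> a i `&` a j = set0 &
      forall w, exists i, a i w].

Definition beta_coef (F1 F2 : set (set Omega)) : \bar R :=
  ereal_sup [set x | exists (I J : nat) (a : 'I_I -> set Omega) (b : 'I_J -> set Omega),
     [/\ fin_partition F1 a, fin_partition F2 b &
     x = (((2%:R)^-1)%:E * \sum_(i < I) \sum_(j < J)
            `| P (a i `&` b j) - P (a i) * P (b j) |)%E ]].

Definition beta_mix (k : nat) : \bar R :=
  ereal_sup [set beta_coef (past t) (future (t + k)) | t in [set: nat]].

Definition mix_exp (p : \bar R) : R :=
  match p with r%:E => 2%:R / (r - 2%:R) | _ => 0 end.

Definition Mixing (p : \bar R) : Prop :=
  (2%:E < p)%E /\
  (\sum_(1 <= k <oo) (((k%:R : R) `^ mix_exp p)%:E * beta_mix k) < +oo)%E.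

(* stationary (S, A, U), read off at time 0 *)
Definition S0 (w : Omega) : S := (Zv 0 w).1.1.
Definition A0 (w : Omega) : 'I_m := (Zv 0 w).1.2.
Definition U0 (w : Omega) : U := Uv 0 w.

Definition is_norm (nrm : gfun -> R) : Prop :=
  [/\ forall g, 0 <= nrm g,
      forall g, nrm g = 0 -> g = (fun _ _ _ => 0),
      forall (c : R) g, nrm (fun a s u => c * g a s u) = `|c| * nrm g &
      forall g1 g2, nrm (fun a s u => g1 a s u + g2 a s u) <= nrm g1 + nrm g2].

Definition Gstar (nrm : gfun -> R) (G : set gfun) : set gfun :=
  [set f | exists g, [/\ G g, 0 < nrm g & f = (fun a s u => g a s u / nrm g)]].

Definition Gstar_a (nrm : gfun -> R) (G : set gfun) (a : 'I_m) : set (S -> U -> R) :=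
  [set (g a) | g in Gstar nrm G].

Definition UniformlyBounded (nrm : gfun -> R) (G : set gfun) : Prop :=
  exists Gb : R, 0 < Gb /\
    forall g, Gstar nrm G g -> forall a s u, `|g a s u| <= Gb.

(* L_p(P_{(S,U)}) norm of f : S x U -> R under the stationary law *)
Definition LpSU (p : \bar R) (f : S -> U -> R) : \bar R :=
  Lnorm P p (fun w => (f (S0 w) (U0 w))%:E).

Definition bracket_cover (p : \bar R) (eps : R) (F : set (S -> U -> R)) (k : nat) : Prop :=
  exists (l u : 'I_k -> S -> U -> R),
    [/\ forall i s, measurable_fun setT (l i s) /\ measurable_fun setT (u i s),
        forall i, (LpSU p (fun s x => (u i s x - l i s x)%R) <= eps%:E)%E &
        forall f, F f -> exists i, forall s x, l i s x <= f s x <= u i s x].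

(* bracketing number N_[](eps, F, L_p)  (+oo if no finite cover) *)
Definition bracketing_number (p : \bar R) (eps : R) (F : set (S -> U -> R)) : \bar R :=
  ereal_inf [set (k%:R)%:E | k in bracket_cover p eps F].

Definition sqrt_log_ext (N : \bar R) : \bar R :=
  match N with r%:E => (Num.sqrt (ln r))%:E | _ => +oo%E end.

Definition UniformBracketingEntropy (p : \bar R) (nrm : gfun -> R) (G : set gfun) : Prop :=
  forall a : 'I_m,
    (\int[@lebesgue_measure R]_(e in [set e : R | (0 < e)%R])
        sqrt_log_ext (bracketing_number p e (Gstar_a nrm G a)) < +oo)%E.

(* h_g(z) = E[g_A(S,U) | Z = z]  (Z takes finitely many values) *)
Definition hcond (g : gfun) (z : Zobs) : R :=
  fine (\int[P]_(w in Zv 0 @^-1` [set z]) (g (A0 w) (S0 w) (U0 w))%:E)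
  / fine (P (Zv 0 @^-1` [set z])).

Definition sup_dev (nrm : gfun -> R) (G : set gfun) (n : nat) (w : Omega) : \bar R :=
  ereal_sup [set `| ((n%:R)^-1 * \sum_(i < n) (hcond g (Zv i w)) ^+ 2)%:E
                   - \int[P]_v ((hcond g (Zv 0 v)) ^+ 2)%:E |%E
            | g in Gstar nrm G].

End MDPUC.

From HB Require Import structures.
From mathcomp Require Import all_boot all_order all_algebra.
From mathcomp Require Import all_classical all_reals all_analysis.
From mathcomp Require Import ring lra zify measurable_realfun.
Import Order.TTheory GRing.Theory Num.Theory.
Import numFieldNormedType.Exports.
Local Open Scope classical_set_scope.
Local Open Scope ring_scope.

(* Since Z = (S, A, S') takes finitely many values, h_g(Z_i)^2 is the combination
   sum_z h_g(z)^2 1{Z_i = z}, whose coefficients are bounded by G^2 uniformly in g.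
   Hence the supremum over G^* is at most G^2 sum_z |p_n(z) - p(z)|, where p_n(z) is
   the empirical frequency of z among Z_1, ..., Z_n: the class G^* no longer appears.  By stationarity,
   Var p_n(z) = n^-2 sum_(i,j) Cov(1{Z_i = z}, 1{Z_j = z}), each covariance is at most
   2 beta(|j - i|), and Mixing makes the beta(k) summable, so Var p_n(z) = O(1/n);
   Chebyshev's inequality concludes. *)

Lemma sum_sum_le_lag {R : realDomainType} {c : nat -> nat -> R} {b : nat -> R} {M : R} :
  (forall i j, c i j = c j i) -> (forall i, c i i <= 1) ->
  (forall i j, (i < j)%N -> c i j <= b (j - i)%N) ->
  (forall n, \sum_(k < n) b k.+1 <= M) ->
  forall n, \sum_(i < n) \sum_(j < n) c i j <= n%:R * (1 + 2 * M).
Proof.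
move=> c_sym c_diag c_lag bM; elim=> [|n IHn]; first by rewrite big_ord0 mul0r.
have column : \sum_(i < n) c i n <= M.
  apply: le_trans _ (bM n); rewrite (reindex_inj rev_ord_inj) /=.
  apply: ler_sum => i _; have lag_lt : (n - i.+1 < n)%N by have := ltn_ord i; lia.
  apply: le_trans (c_lag _ _ lag_lt) _.
  by have -> : (n - (n - i.+1))%N = i.+1 by have := ltn_ord i; lia.
have row : \sum_(j < n) c n j <= M.
  by under eq_bigr do rewrite c_sym.
have -> : \sum_(i < n.+1) \sum_(j < n.+1) c i j =
    \sum_(i < n) \sum_(j < n) c i j + \sum_(i < n) c i n + \sum_(j < n) c n j + c n n.
  rewrite big_ord_recr /= big_ord_recr /=.
  under eq_bigr do rewrite big_ord_recr /=.
  by rewrite big_split /= !addrA.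
by rewrite -natr1 mulrDl mul1r; have := c_diag n; lra.
Qed.

Lemma sumr_sqr_ge_sum_norm (R : realFieldType) (I : finType) (x : I -> R) (a : R) :
  0 <= a -> a < \sum_i `|x i| -> (a / #|I|.+1%:R) ^+ 2 <= \sum_i x i ^+ 2.
Proof.
move=> a0 a_lt; set b := a / #|I|.+1%:R.
have b0 : 0 <= b by rewrite divr_ge0.
have [i xi_big] : exists i, b < `|x i|.
  apply: contrapT => none.
  have small i : `|x i| <= b by rewrite leNgt; apply/negP => ?; apply: none; exists i.
  move: a_lt; apply/negP; rewrite -leNgt.
  apply: le_trans (ler_sum _ (fun i _ => small i)) _.
  rewrite sumr_const -mulr_natr /b mulrAC ler_pdivrMr ?ltr0n //.
  by rewrite ler_wpM2l // ler_nat.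
rewrite (bigD1 i) //= -[b ^+ 2]addr0; apply: lerD.
- by rewrite -[x i ^+ 2]real_normK ?num_real // ler_sqr ?nnegrE // ltW.
- by apply: sumr_ge0 => j _; rewrite sqr_ge0.
Qed.

Lemma squeeze_invn_cvge0 (R : realType) (u : nat -> \bar R) (C : R) :
  (forall n, (0 < n)%N -> (0 <= u n <= (C / n%:R)%:E)%E) -> u @ \oo --> 0%E.
Proof.
move=> u_bnd.
apply: (@squeeze_cvge _ _ _ _ (cst 0%E) _ (fun n => (2 * `|C| * harmonic n)%:E)).
- near=> n; have n0 : (0 < n)%N by near: n; exact: nbhs_infty_gt.
  have /andP[-> /le_trans] := u_bnd n n0; apply; rewrite lee_fin /harmonic /=.
  rewrite ler_pdivrMr ?ltr0n //.
  have -> : 2 * `|C| * n.+1%:R^-1 * n%:R = `|C| * (2 * n%:R / n.+1%:R) by ring.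
  apply: le_trans (ler_norm C) _; rewrite -{1}[`|C|]mulr1 ler_wpM2l //.
  by rewrite ler_pdivlMr ?ltr0n // mul1r -natrM ler_nat; lia.
- exact: cvg_cst.
- apply: cvg_EFin; first exact: nearW.
  by rewrite -(mulr0 (2 * `|C|)); apply: cvgMr; exact: cvg_harmonic.
Unshelve. all: by end_near.
Qed.

Section measure_facts.
Context {d : measure_display} {T : measurableType d} {R : realType}.

Lemma markov_measure (mu : {measure set T -> \bar R}) {f : T -> R} {c : R} :
  0 < c -> measurable_fun setT f ->
  (c%:E * mu [set x | (c <= `|f x|)%R] <= \int[mu]_x `|f x|%:E)%E.
Proof.
move=> c0 mf.
have := @le_integral_comp_abse _ _ _ mu setT measurableT (EFin \o f) c idfun.
rewrite setTI; apply => //; first exact: measurable_id.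
exact/measurable_EFinP.
Qed.

Lemma measurable_normr_ge (c : R) {f : T -> R} :
  measurable_fun setT f -> measurable [set x | c <= `|f x|].
Proof.
move=> mf; rewrite -[X in measurable X]setTI.
have mnf : measurable_fun setT (EFin \o (fun x => `|f x|)).
  by apply/measurable_EFinP/measurableT_comp.
exact: (@emeasurable_fun_c_infty _ _ _ setT _ measurableT mnf c%:E).
Qed.

Lemma fine_measureK (mu : {finite_measure set T -> \bar R}) (A : set T) :
  measurable A -> (fine (mu A))%:E = mu A.
Proof. by move=> mA; rewrite fineK // fin_num_measure. Qed.

Lemma integral_sum_indic (mu : {finite_measure set T -> \bar R}) (I : eqType) (s : seq I)
    (a : I -> R) (A : I -> set T) :
  (forall i, 0 <= a i) -> (forall i, measurable (A i)) ->
  (\int[mu]_x (\sum_(i <- s) a i * \1_(A i) x)%:E =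
   (\sum_(i <- s) a i * fine (mu (A i)))%:E)%E.
Proof.
move=> a0 mA; under eq_integral do rewrite -sumEFin.
rewrite ge0_integral_sum //; last 2 first.
- by move=> i; apply/measurable_EFinP/measurable_funM => //; exact: measurable_indic.
- by move=> i x _; rewrite lee_fin mulr_ge0.
rewrite -sumEFin; apply: eq_bigr => i _; under eq_integral do rewrite EFinM.
rewrite ge0_integralZl_EFin //; last exact/measurable_EFinP/measurable_indic.
by rewrite integral_indic // setIT EFinM fine_measureK.
Qed.

Lemma integral_sqr_subr (P : probability T R) (f : T -> R) (c a b : R) :
  0 <= c -> measurable_fun setT f -> (forall x, 0 <= f x) ->
  (\int[P]_x (f x)%:E = a%:E)%E -> (\int[P]_x (f x ^+ 2)%:E = b%:E)%E ->
  (\int[P]_x ((f x - c) ^+ 2)%:E = (b - 2 * c * a + c ^+ 2)%:E)%E.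
Proof.
move=> c0 mf f0 int_f int_f2.
have mf2 : measurable_fun setT (fun x => f x ^+ 2) by exact: measurable_funX.
have mfc : measurable_fun setT (fun x => (f x - c) ^+ 2).
  by apply/measurable_funX/measurable_funB.
have mcf : measurable_fun setT (fun x => 2 * c * f x) by exact: measurable_funM.
(* Additivity of the integral of nonnegative functions needs no integrability,
   hence the expansion is arranged with nonnegative terms on both sides. *)
have split_sqr : (\int[P]_x ((f x - c) ^+ 2)%:E + \int[P]_x (2 * c * f x)%:E =
    \int[P]_x (f x ^+ 2)%:E + \int[P]_x (c ^+ 2)%:E)%E.
  rewrite -!ge0_integralD //.
  all: try by move=> x _; rewrite lee_fin ?sqr_ge0 ?mulr_ge0.
  all: try exact/measurable_EFinP.
  by apply: eq_integral => x _; rewrite -!EFinD; congr EFin; ring.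
move: split_sqr; under [X in (_ + X)%E]eq_integral do rewrite EFinM.
rewrite ge0_integralZl_EFin ?mulr_ge0 //; last 2 first.
- by move=> x _; rewrite lee_fin.
- exact/measurable_EFinP.
rewrite int_f int_f2 integral_cst //= probability_setT mule1 -EFinM.
by case: (\int[P]_x _)%E => [r||] //= [r_eq]; congr EFin; lra.
Qed.

End measure_facts.

Definition bipartition {T} (A : set T) : 'I_2 -> set T :=
  fun k => if k == ord0 then A else ~` A.

Lemma fin_partition_bipartition d (T : measurableType d) (F : set (set T)) (A : set T) :
  sigma_algebra setT F -> F A -> fin_partition F (bipartition A).
Proof.
move=> sF FA; split.
- move=> k; rewrite /bipartition; case: ifP => // _.
  by rewrite -setTD; case: sF => _ + _; apply.
- move=> [[|[|k]] k2] [[|[|l]] l2] //= kl; rewrite /bipartition /=.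
  + by rewrite setICr.
  + by rewrite setICl.
- move=> w; have [Aw|nAw] := pselect (A w).
  + by exists ord0; rewrite /bipartition eqxx.
  + by exists ord_max.
Qed.

Section observation_process.
Context {R : realType} {d : measure_display} {Omega : measurableType d}
  {P : probability Omega R} {S : finType} {m : nat} {dU : measure_display}
  {U : measurableType dU} {Zv : nat -> Omega -> Zobs S m} {Uv : nat -> Omega -> U}.
Hypothesis mZ : forall i z, measurable (Zv i @^-1` [set z]).
Hypothesis stZ : stationary P Zv Uv.
Hypothesis mU0 : measurable_fun setT (Uv 0).

Local Notation Z := (Zobs S m).

Definition Zevent i (z : Z) := Zv i @^-1` [set z].

Lemma measurable_Zevent i z : measurable (Zevent i z). Proof. exact: mZ. Qed.

Lemma stationary_Zevent i z : P (Zevent i z) = P (Zevent 0 z).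
Proof.
have at_time t : [set w | forall k : 'I_1, Zv (t + k) w = z /\ [set: U] (Uv (t + k) w)]
    = Zevent t z.
  apply/seteqP; split => w /=; first by move=> /(_ ord0) []; rewrite addn0.
  by move=> Zw k; rewrite (ord1 k) addn0.
have := stZ 0%N i (fun _ => z) (fun _ => setT) (fun _ => measurableT).
by rewrite at_time (at_time 0%N).
Qed.

Lemma past_Zevent i z : past Zv Uv i (Zevent i z).
Proof. by apply: sub_gen_smallest; exists i; split => //; left; exists z. Qed.

Lemma future_Zevent i z : future Zv Uv i (Zevent i z).
Proof. by apply: sub_gen_smallest; exists i; split => //; left; exists z. Qed.

Lemma beta_coef_ge0 (F1 F2 : set (set Omega)) :
  sigma_algebra setT F1 -> sigma_algebra setT F2 -> (0 <= beta_coef P F1 F2)%E.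
Proof.
move=> sF1 sF2; apply: le_trans (ereal_sup_ubound _); last first.
  exists 2%N, 2%N, (bipartition set0), (bipartition set0); split; last by [].
  - by apply: fin_partition_bipartition => //; case: sF1.
  - by apply: fin_partition_bipartition => //; case: sF2.
by rewrite mule_ge0 ?lee_fin ?invr_ge0 // sume_ge0 // => k _; rewrite sume_ge0.
Qed.

Lemma beta_mix_ge0 k : (0 <= beta_mix P Zv Uv k)%E.
Proof.
apply: le_trans (ereal_sup_ubound _); last by exists 0%N.
by apply: beta_coef_ge0; exact: smallest_sigma_algebra.
Qed.

Lemma cov_Zevent_le_beta_mix i j z : (i < j)%N ->
  ((2^-1)%:E * `|P (Zevent i z `&` Zevent j z) - P (Zevent i z) * P (Zevent j z)|
    <= beta_mix P Zv Uv (j - i))%E.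
Proof.
move=> lt_ij; rewrite /beta_mix; apply: le_trans (ereal_sup_ubound _); last by exists i.
rewrite subnKC ?(ltnW lt_ij) // /beta_coef; apply: le_trans (ereal_sup_ubound _); last first.
  exists 2%N, 2%N, (bipartition (Zevent i z)), (bipartition (Zevent j z)); split; last by [].
  - apply: fin_partition_bipartition; [exact: smallest_sigma_algebra | exact: past_Zevent].
  - apply: fin_partition_bipartition; [exact: smallest_sigma_algebra | exact: future_Zevent].
apply: lee_wpmul2l; first by rewrite lee_fin invr_ge0.
rewrite !big_ord_recl !big_ord0 /bipartition /= -addeA.
by apply: lee_paddr => //; rewrite !adde_ge0.
Qed.

Lemma Mixing_beta_mix_summable p : Mixing P Zv Uv p -> exists M : R,
  (forall n, \sum_(k < n) fine (beta_mix P Zv Uv k.+1) <= M) /\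
  (forall k, beta_mix P Zv Uv k.+1 \is a fin_num).
Proof.
case=> p_gt2; set L := (X in (X < +oo)%E) => L_fin.
have exp_ge0 : 0 <= mix_exp p.
  case: p p_gt2 {L L_fin} => [r||] //=; rewrite lte_fin => r_gt2.
  by rewrite divr_ge0 // subr_ge0 ltW.
have partial_le n : (\sum_(k < n) beta_mix P Zv Uv k.+1 <= L)%E.
  apply: le_trans (nneseries_lim_ge n.+1 _); last first.
    by move=> k _ _; rewrite mule_ge0 ?lee_fin ?powR_ge0 ?beta_mix_ge0.
  rewrite big_add1 /= big_mkord; apply: lee_sum => k _.
  rewrite lee_pemull ?beta_mix_ge0 // lee_fin.
  by apply: le_trans (ler_powR _ exp_ge0); rewrite ?powRr0 ?ler1n.
have L_ge0 : (0 <= L)%E by apply: le_trans (partial_le 0%N); rewrite big_ord0.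
have beta_fin k : beta_mix P Zv Uv k.+1 \is a fin_num.
  rewrite ge0_fin_numE ?beta_mix_ge0 //; apply: le_lt_trans L_fin.
  apply: le_trans (partial_le k.+1); rewrite big_ord_recr /= lee_paddl //.
  by rewrite sume_ge0 // => i _; rewrite beta_mix_ge0.
exists (fine L); split => // n; rewrite sum_fine //.
apply: fine_le; last exact: partial_le.
- by apply/sum_fin_numP => i _ _; exact: beta_fin.
- by rewrite ge0_fin_numE.
Qed.

Definition freq n z w : R := n%:R^-1 * \sum_(i < n) \1_(Zevent i z) w.
Definition Zprob z : R := fine (P (Zevent 0 z)).

Lemma measurable_freq n z : measurable_fun setT (freq n z).
Proof.
apply: measurable_funM => //.
by apply: measurable_sum => i; exact/measurable_indic/measurable_Zevent.
Qed.

Lemma freq_ge0 n z w : 0 <= freq n z w.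
Proof. by rewrite mulr_ge0 ?invr_ge0 // sumr_ge0. Qed.

Lemma P_Zevent i z : P (Zevent i z) = (Zprob z)%:E.
Proof. by rewrite stationary_Zevent fine_measureK //; exact: measurable_Zevent. Qed.

Lemma fine_P_Zevent i z : fine (P (Zevent i z)) = Zprob z.
Proof. by rewrite P_Zevent. Qed.

Lemma Zprob_ge0 z : 0 <= Zprob z.
Proof. by rewrite fine_ge0. Qed.

Lemma Zprob_le1 z : Zprob z <= 1.
Proof.
by rewrite -lee_fin fine_measureK ?probability_le1 //; exact: measurable_Zevent.
Qed.

Lemma integral_freq n z : (0 < n)%N -> (\int[P]_w (freq n z w)%:E = (Zprob z)%:E)%E.
Proof.
move=> n_gt0; under eq_integral do rewrite /freq mulr_sumr.
rewrite integral_sum_indic ?invr_ge0 //; last by move=> i; exact: measurable_Zevent.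
under eq_bigr do rewrite fine_P_Zevent.
have n_neq0 : n%:R != 0 :> R by rewrite pnatr_eq0 -lt0n.
by congr EFin; rewrite sumr_const card_ord; field.
Qed.

Lemma integral_freq_sqr n z : (\int[P]_w (freq n z w ^+ 2)%:E =
  (n%:R^-1 ^+ 2 * \sum_(i < n) \sum_(j < n) fine (P (Zevent i z `&` Zevent j z)))%:E)%E.
Proof.
have freq_sqr w : freq n z w ^+ 2 =
    \sum_(i < n) \sum_(j < n) n%:R^-1 ^+ 2 * \1_(Zevent i z `&` Zevent j z) w.
  rewrite /freq exprMn [(\sum_(_ < _) _) ^+ 2]expr2 big_distrlr mulr_sumr.
  by apply: eq_bigr => i _; rewrite mulr_sumr; apply: eq_bigr => j _; rewrite indicI.
under eq_integral do rewrite freq_sqr pair_bigA.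
rewrite integral_sum_indic ?exprn_ge0 ?invr_ge0 //; last first.
  by move=> ij; apply: measurableI; exact: measurable_Zevent.
congr EFin; rewrite mulr_sumr; under [RHS]eq_bigr do rewrite mulr_sumr.
by rewrite pair_bigA.
Qed.

Lemma integral_freq_dev_sqr n z : (0 < n)%N ->
  (\int[P]_w ((freq n z w - Zprob z) ^+ 2)%:E = (n%:R^-1 ^+ 2 *
    \sum_(i < n) \sum_(j < n) (fine (P (Zevent i z `&` Zevent j z)) - Zprob z ^+ 2))%:E)%E.
Proof.
move=> n_gt0; rewrite (@integral_sqr_subr _ _ _ P _ _ _ _ (Zprob_ge0 z) (measurable_freq n z)
  (freq_ge0 n z) (integral_freq n z n_gt0) (integral_freq_sqr n z)).
congr EFin; under [in RHS]eq_bigr do rewrite sumrB sumr_const card_ord.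
have n_neq0 : n%:R != 0 :> R by rewrite pnatr_eq0 -lt0n.
by rewrite sumrB sumr_const card_ord -/(Zprob z); field.
Qed.

Lemma integral_freq_dev_sqr_le p : Mixing P Zv Uv p -> exists K : R, forall n z, (0 < n)%N ->
  (\int[P]_w ((freq n z w - Zprob z) ^+ 2)%:E <= (K / n%:R)%:E)%E.
Proof.
move=> /Mixing_beta_mix_summable [M [beta_le beta_fin]].
pose K := 1 + 2 * (2 * M).
exists K => n z n_gt0; rewrite integral_freq_dev_sqr // lee_fin.
pose c i j := fine (P (Zevent i z `&` Zevent j z)) - Zprob z ^+ 2.
have c_sym i j : c i j = c j i by rewrite /c setIC.
have c_diag i : c i i <= 1.
  by rewrite /c setIid P_Zevent /=; have := Zprob_le1 z; have := sqr_ge0 (Zprob z); lra.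
pose b k := 2 * fine (beta_mix P Zv Uv k).
have c_lag i j : (i < j)%N -> c i j <= b (j - i)%N.
  move=> lt_ij; have := cov_Zevent_le_beta_mix _ _ z lt_ij.
  have [k ->] : exists k, (j - i = k.+1)%N by exists (j - i).-1; rewrite prednK // subn_gt0.
  have mEij := measurableI _ _ (measurable_Zevent i z) (measurable_Zevent j z).
  rewrite -(fine_measureK P _ mEij) !P_Zevent -(fineK (beta_fin k)) -!EFinM lee_fin /= => cov_le.
  by apply: le_trans (ler_norm _) _; rewrite /c /b expr2; lra.
have b_le k : \sum_(i < k) b i.+1 <= 2 * M.
  by rewrite -mulr_sumr ler_wpM2l.
have n_neq0 : n%:R != 0 :> R by rewrite pnatr_eq0 -lt0n.
have -> : K / n%:R = n%:R^-1 ^+ 2 * (n%:R * K) by field.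
rewrite ler_wpM2l ?exprn_ge0 ?invr_ge0 //.
exact: (sum_sum_le_lag c_sym c_diag c_lag b_le n).
Qed.

Lemma sum_indic_Zevent i (F : Z -> R) w : F (Zv i w) = \sum_z F z * \1_(Zevent i z) w.
Proof.
rewrite (bigD1 (Zv i w)) //= indicE mem_set // mulr1 big1 ?addr0 // => z' z'_neq.
by rewrite indicE memNset ?mulr0 // => /= z'_eq; rewrite z'_eq eqxx in z'_neq.
Qed.

Lemma measurable_eval_at0 (g : gfun R S m U) : (forall a s, measurable_fun setT (g a s)) ->
  measurable_fun setT (fun w => g (A0 Zv w) (S0 Zv w) (U0 Uv w)).
Proof.
move=> mg; rewrite (_ : (fun w => _) =
    fun w => \sum_z g z.1.2 z.1.1 (Uv 0 w) * \1_(Zevent 0 z) w).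
  apply: measurable_sum => z; apply: measurable_funM; first exact: measurableT_comp.
  exact/measurable_indic/measurable_Zevent.
apply/funext => w.
by rewrite /A0 /S0 /U0 (sum_indic_Zevent 0 (fun z => g z.1.2 z.1.1 (Uv 0 w))).
Qed.

Lemma normr_hcond_le (g : gfun R S m U) (Gb : R) : 0 <= Gb ->
  (forall a s, measurable_fun setT (g a s)) -> (forall a s u, `|g a s u| <= Gb) ->
  forall z, `|hcond P Zv Uv g z| <= Gb.
Proof.
move=> Gb0 mg g_le z; rewrite /hcond -/(Zevent 0 z) -/(Zprob z).
have mE := measurable_Zevent 0 z.
have mg0 : measurable_fun (Zevent 0 z) (fun w => g (A0 Zv w) (S0 Zv w) (U0 Uv w)).
  by apply: measurable_funTS; exact: measurable_eval_at0.
set I := (\int[P]_(w in _) _)%E.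
have I_le : (`|I| <= (Gb * Zprob z)%:E)%E.
  apply: le_trans (le_abse_integral _ mE _) _; first exact/measurable_EFinP.
  apply: le_trans (_ : \int[P]_(w in Zevent 0 z) Gb%:E <= _)%E.
    apply: ge0_le_integral => //; last by move=> w _; rewrite lee_fin g_le.
    by apply: measurableT_comp => //; exact/measurable_EFinP.
  by rewrite integral_cst // EFinM /Zprob fine_measureK.
have I_fin : I \is a fin_num by case: I I_le.
have [->|p_neq0] := eqVneq (Zprob z) 0; first by rewrite invr0 mulr0 normr0.
rewrite normrM normfV (ger0_norm (Zprob_ge0 z)) ler_pdivrMr ?lt_def ?p_neq0 ?Zprob_ge0 //.
by move: I_le; rewrite -(fineK I_fin) /= lee_fin.
Qed.

Lemma sup_dev_le nrm G (Gb : R) n w : 0 <= Gb ->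
  (forall g, Gstar nrm G g -> forall a s, measurable_fun setT (g a s)) ->
  (forall g, Gstar nrm G g -> forall a s u, `|g a s u| <= Gb) ->
  (sup_dev P Zv Uv nrm G n w <= (Gb ^+ 2 * \sum_z `|freq n z w - Zprob z|)%:E)%E.
Proof.
move=> Gb0 mG G_le; apply: ub_ereal_sup => _ [g Gg <-].
set h := hcond P Zv Uv g.
have h_le z : `|h z| <= Gb by apply: normr_hcond_le; [| exact: mG | exact: G_le].
have empirical : n%:R^-1 * \sum_(i < n) h (Zv i w) ^+ 2 = \sum_z h z ^+ 2 * freq n z w.
  under eq_bigr do rewrite (sum_indic_Zevent _ (fun z => h z ^+ 2) w).
  rewrite exchange_big /= mulr_sumr; apply: eq_bigr => z _.
  by rewrite /freq -mulr_sumr mulrCA.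
have expected : (\int[P]_v (h (Zv 0 v) ^+ 2)%:E = (\sum_z h z ^+ 2 * Zprob z)%:E)%E.
  under eq_integral do rewrite (sum_indic_Zevent 0 (fun z => h z ^+ 2)).
  rewrite integral_sum_indic // => z; [exact: sqr_ge0 | exact: measurable_Zevent].
rewrite empirical expected -EFinB /= lee_fin -sumrB.
apply: le_trans (ler_norm_sum _ _ _) _; rewrite mulr_sumr; apply: ler_sum => z _.
rewrite -mulrBr normrM ger0_norm ?sqr_ge0 // ler_wpM2r //.
by rewrite -[h z ^+ 2]real_normK ?num_real // ler_sqr ?nnegrE.
Qed.

Lemma sup_dev_prefix nrm G n w w' : (forall i : 'I_n, Zv i w = Zv i w') ->
  sup_dev P Zv Uv nrm G n w = sup_dev P Zv Uv nrm G n w'.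
Proof.
move=> same_prefix; congr ereal_sup; apply: eq_imagel => g _.
by congr (`| _ - _ |)%E; congr (EFin (_ * _)); apply: eq_bigr => i _; rewrite same_prefix.
Qed.

Lemma measurable_sup_dev_gt nrm G n (eps : R) :
  measurable [set w | (eps%:E < sup_dev P Zv Uv nrm G n w)%E].
Proof.
(* The supremum over an arbitrary class is a function of (Z_0, ..., Z_(n-1)) alone,
   which takes finitely many values: the event is a finite union of cylinders. *)
pose cylinder (t : {ffun 'I_n -> Z}) := \bigcap_(i in [set: 'I_n]) Zevent i (t i).
pose hit := [set t | exists w, cylinder t w /\ (eps%:E < sup_dev P Zv Uv nrm G n w)%E].
have -> : [set w | (eps%:E < sup_dev P Zv Uv nrm G n w)%E] = \bigcup_(t in hit) cylinder t.
  apply/seteqP; split => w.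
  - move=> dev_w; have cyl_w : cylinder [ffun i : 'I_n => Zv i w] w.
      by move=> i _; rewrite /= ffunE.
    by exists [ffun i : 'I_n => Zv i w] => //; exists w.
  - move=> [t [w' [cyl_w' dev_w']] cyl_w] /=; rewrite (sup_dev_prefix _ _ _ w w') // => i.
    by rewrite (cyl_w i I) (cyl_w' i I).
apply: fin_bigcup_measurable; first exact: finite_finset.
move=> t _; apply: fin_bigcap_measurable; first exact: finite_finset.
by move=> i _; exact: measurable_Zevent.
Qed.

Lemma P_sup_dev_gt_le nrm G p (eps : R) : 0 < eps ->
  (forall g, Gstar nrm G g -> forall a s, measurable_fun setT (g a s)) ->
  Mixing P Zv Uv p -> UniformlyBounded nrm G ->
  exists C : R, forall n, (0 < n)%N ->
    (P [set w | (eps%:E < sup_dev P Zv Uv nrm G n w)%E] <= (C / n%:R)%:E)%E.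
Proof.
move=> eps_gt0 mG mix [Gb [Gb_gt0 G_le]].
have [K freq_dev_le] := integral_freq_dev_sqr_le _ mix.
pose N := #|{: Z}|.
(* On the event, sup_dev_le gives sum_z |freq n z - Zprob z| > eps / Gb^2;
   N.+1 instead of N keeps a positive when Z is empty (m = 0). *)
pose a := (eps / Gb ^+ 2 / N.+1%:R) ^+ 2.
have a_gt0 : 0 < a by rewrite exprn_gt0 // !divr_gt0 // exprn_gt0.
exists (K *+ N / a) => n n_gt0.
pose Q w := \sum_z (freq n z w - Zprob z) ^+ 2.
have Q_ge0 w : 0 <= Q w by rewrite sumr_ge0 // => z _; rewrite sqr_ge0.
have mQz z : measurable_fun setT (fun w => (freq n z w - Zprob z) ^+ 2).
  by apply/measurable_funX/measurable_funB => //; exact: measurable_freq.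
have mQ : measurable_fun setT Q by exact: measurable_sum.
have dev_sub : [set w | (eps%:E < sup_dev P Zv Uv nrm G n w)%E] `<=` [set w | a <= `|Q w|].
  move=> w /= /lt_le_trans /(_ (sup_dev_le _ _ _ n w (ltW Gb_gt0) mG G_le)); rewrite lte_fin.
  move=> lt_eps; rewrite ger0_norm //; apply: sumr_sqr_ge_sum_norm.
    by rewrite divr_ge0 ?exprn_ge0 ?ltW.
  by rewrite ltr_pdivrMr ?exprn_gt0 // mulrC.
have int_Q : (\int[P]_w `|Q w|%:E <= (K *+ N / n%:R)%:E)%E.
  under eq_integral do rewrite (ger0_norm (Q_ge0 _)) /Q -sumEFin.
  rewrite ge0_integral_sum //; last 2 first.
  - by move=> z; exact/measurable_EFinP.
  - by move=> z w _; rewrite lee_fin sqr_ge0.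
  apply: (@le_trans _ _ (\sum_(z : Z) (K / n%:R)%:E)%E).
    by apply: lee_sum => z _; exact: freq_dev_le.
  by rewrite sumEFin sumr_const -mulrnAl.
have mdev := measurable_sup_dev_gt nrm G n eps.
have mQa := measurable_normr_ge a mQ.
apply: le_trans (le_measure _ (mem_set mdev) (mem_set mQa) dev_sub) _.
rewrite mulrAC mulrC EFinM lee_pdivlMl //.
exact: le_trans (markov_measure P a_gt0 mQ) int_Q.
Qed.

End observation_process.

Theorem lemma6 (R : realType) (d : measure_display) (Omega : measurableType d)
  (P : probability Omega R) (S : finType) (m : nat) (dU : measure_display)
  (U : measurableType dU)
  (Zv : nat -> Omega -> Zobs S m) (Uv : nat -> Omega -> U)
  (nrm : gfun R S m U -> R) (G : set (gfun R S m U)) (p : \bar R) :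
  (forall i z, measurable (Zv i @^-1` [set z])) ->
  (forall i, measurable_fun setT (Uv i)) ->
  stationary P Zv Uv ->
  is_norm nrm ->
  (forall g, Gstar nrm G g -> forall a s, measurable_fun setT (g a s)) ->
  Mixing P Zv Uv p ->
  UniformlyBounded nrm G ->
  UniformBracketingEntropy P Zv Uv p nrm G ->
  forall eps : R, 0 < eps ->
    P [set w | (eps%:E < sup_dev P Zv Uv nrm G n w)%E] @[n --> \oo] --> 0%E.
Proof.
move=> mZ mU stZ _ mG mix G_bnd _ eps eps_gt0.
have [C P_le] := P_sup_dev_gt_le mZ stZ (mU 0%N) nrm G p eps eps_gt0 mG mix G_bnd.
apply: squeeze_invn_cvge0 => n n_gt0; apply/andP; split; [exact: measure_ge0 | exact: P_le].
Qed.
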